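(* Let $A$ be a dense subspace of a topological space $X$. If $C(A)$ has the countable sup property, then $C(X)$ has the countable sup property.
   Context: $C(Y)$ denotes the vector lattice of all real-valued continuous functions on a space $Y$ with the pointwise order. A vector lattice has the countable sup property if every nonempty subset possessing a supremum contains a countable subset with the same supremum. *)

From HB Require Import structures.
From mathcomp Require Import all_boot all_order all_algebra.
From mathcomp Require Import all_classical all_reals topology normedtype.

Import Order.TTheory GRing.Theory Num.Theory.
Import numFieldTopology.Exports.
Local Open Scope classical_set_scope.
Local Open Scope ring_scope.

Definition Cfun (R : realType) (Y : topologicalType) : set (Y -> R) :=
  [set f | continuous (f : Y -> R)].

Definition is_sup_C (R : realType) (Y : topologicalType)
    (S : set (Y -> R)) (g : Y -> R) : Prop :=
  [/\ Cfun R Y g,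
      (forall f, S f -> forall y, f y <= g y) &
      (forall h, Cfun R Y h -> (forall f, S f -> forall y, f y <= h y) ->
         forall y, g y <= h y)].

Definition countable_sup_property (R : realType) (Y : topologicalType) : Prop :=
  forall S : set (Y -> R), S `<=` Cfun R Y -> S !=set0 ->
  forall g, is_sup_C R Y S g ->
  exists T : set (Y -> R), [/\ T `<=` S, countable T & is_sup_C R Y T g].

From mathcomp Require Import all_boot all_order all_algebra all_classical all_reals topology normedtype.
From mathcomp Require Import lra.
Import Order.TTheory GRing.Theory Num.Theory.
Import numFieldTopology.Exports.
Local Open Scope classical_set_scope.
Local Open Scope ring_scope.

(* For any space Y, C(Y) has the countable sup property iff every family of
   sets [e > 0], e continuous, has a countable subfamily whose union is dense
   in the whole union, density being tested only against sets [k > 0] with k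
   continuous.  Given a supremum g of S and d > 0, this is applied to the sets
   [f > g - d], f in S.  The density condition passes from a dense subspace A
   to X, because a nonempty open set [k > 0] /\ [e > 0] of X meets A. *)

Section continuous_real_functions.
Context {R : realType} {T : topologicalType}.

Lemma continuous_subr {f g : T -> R} :
  continuous f -> continuous g -> continuous (fun x => f x - g x).
Proof. by move=> cf cg x; exact: (@continuousB _ R^o _ _ _ x (cf x) (cg x)). Qed.

Lemma continuous_mull (c : R) {f : T -> R} :
  continuous f -> continuous (fun x => c * f x).
Proof. by move=> cf x; apply: continuousM (cf x); exact: cst_continuous. Qed.

Lemma continuous_comp_set_val (A : set T) {f : T -> R} :
  continuous f -> continuous (fun a : set_type A => f (set_val a)).
Proof.
by move=> cf a; apply: continuous_comp (cf _); exact: initial_continuous.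
Qed.

Lemma open_pos {f : T -> R} : continuous f -> open [set x | 0 < f x].
Proof.
by move=> cf; apply: (@open_comp _ _ f [set r | 0 < r]);
  [move=> x _; exact: cf | exact: open_gt].
Qed.

End continuous_real_functions.

Section clamp.
Context {R : realType}.
Implicit Types r : R.

Definition clamp01 r := Order.max 0 (Order.min 1 r).

Lemma clamp01_ge0 r : 0 <= clamp01 r.
Proof. by rewrite le_max lexx. Qed.

Lemma clamp01_le1 r : clamp01 r <= 1.
Proof. by rewrite ge_max ler01 ge_min lexx. Qed.

Lemma clamp01_gt0 r : (0 < clamp01 r) = (0 < r).
Proof. by rewrite lt_max ltxx lt_min ltr01. Qed.

Lemma clamp01_le0 r : r <= 0 -> clamp01 r = 0.
Proof.
by move=> r0; apply/eqP; rewrite eq_le clamp01_ge0 leNgt clamp01_gt0 -leNgt r0.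
Qed.

Lemma clamp01_1 : clamp01 1 = 1.
Proof. by rewrite /clamp01 minxx maxEle ler01. Qed.

Context {T : topologicalType}.
Implicit Types h : T -> R.

Lemma continuous_clamp01 {h : T -> R} :
  continuous h -> continuous (clamp01 \o h).
Proof.
move=> ch; apply: max_fun_continuous; first exact: cst_continuous.
by apply: min_fun_continuous => //; exact: cst_continuous.
Qed.

Definition bump h (b : T) : T -> R := fun y => clamp01 ((h b)^-1 * h y).

Lemma continuous_bump h b : continuous h -> continuous (bump h b).
Proof. by move=> ch; exact: continuous_clamp01 (continuous_mull _ ch). Qed.

Lemma bump_at h b : 0 < h b -> bump h b b = 1.
Proof. by move=> hb; rewrite /bump mulVf ?gt_eqF ?clamp01_1. Qed.

Lemma bump_gt0 h b y : 0 < h b -> (0 < bump h b y) = (0 < h y).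
Proof. by move=> hb; rewrite /bump clamp01_gt0 pmulr_rgt0 ?invr_gt0. Qed.

Lemma bump_le0 h b y : 0 < h b -> h y <= 0 -> bump h b y = 0.
Proof. by move=> hb hy; rewrite /bump clamp01_le0 // pmulr_rle0 ?invr_gt0. Qed.

End clamp.

Section cozero_density.
Context {R : realType} {Y : topologicalType}.

Definition pos_disjoint (k e : Y -> R) := forall y, 0 < k y -> e y <= 0.

(* For completely regular Y: the union of the [e i > 0], i in T, is dense in
   the union over i in S. *)
Definition cozero_dense {I : Type} (e : I -> Y -> R) (T S : set I) :=
  forall k, continuous k -> (forall i, T i -> pos_disjoint k (e i)) ->
  forall i, S i -> pos_disjoint k (e i).

End cozero_density.

Definition countable_cozero_dense_property (R : realType)
    (Y : topologicalType) :=
  forall (I : Type) (e : I -> Y -> R) (S : set I),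
  (forall i, S i -> continuous (e i)) ->
  exists T, [/\ T `<=` S, countable T & cozero_dense e T S].

Lemma countable_witnesses {U V : Type} (E : set U) (T : set V)
    (r : V -> U -> Prop) :
  countable T -> (forall v, T v -> exists2 u, E u & r v u) ->
  exists W, [/\ W `<=` E, countable W &
             forall v, T v -> exists2 u, W u & r v u].
Proof.
move=> cT hT; case: (pselect (E !=set0)) => [[u0 Eu0]|E0]; last first.
  exists set0; split; [exact: sub0set | exact: countable0 |].
  by move=> v /hT[u Eu _]; case: E0; exists u.
have /choice[w hw] : forall v, exists u, T v -> E u /\ r v u.
  move=> v; case: (pselect (T v)) => [/hT[u Eu ruv]|nTv].
    by exists u.
  by exists u0.
exists (w @` T); split.
- by move=> _ [v Tv <-]; case: (hw v Tv).
- exact: sub_countable (card_image_le _ _) cT.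
- by move=> v Tv; exists (w v); [exists v | case: (hw v Tv)].
Qed.

Section countable_sup_cozero_dense.
Variables (R : realType) (Y : topologicalType) (I : Type).
Variables (e : I -> Y -> R) (S : set I).
Hypothesis e_continuous : forall i, S i -> continuous (e i).

Definition bumps : set (Y -> R) := [set t : Y -> R | [/\ continuous t,
  forall y, 0 <= t y <= 1 &
  (exists2 i, S i & forall y, 0 < t y -> 0 < e i y) \/
  (forall i, S i -> pos_disjoint t (e i))]].

Lemma bumps_sup : is_sup_C R Y bumps (fun=> 1).
Proof.
split; first exact: cst_continuous.
  by move=> t [_ t01 _] y; case/andP: (t01 y).
move=> u uC ub.
have bump01 h b y : 0 <= bump h b y <= 1 by rewrite clamp01_ge0 clamp01_le1.
have u_ge1_pos i y : S i -> 0 < e i y -> 1 <= u y.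
  move=> Si eiy; rewrite leNgt; apply/negP => uy1.
  pose h z := Order.min (1 - u z) (e i z).
  have hy : 0 < h y by rewrite lt_min subr_gt0 uy1 eiy.
  have : bumps (bump h y).
    split=> //; first by apply/continuous_bump/min_fun_continuous;
      [apply: continuous_subr => //; exact: cst_continuous |
       exact: e_continuous].
    by left; exists i => // z; rewrite bump_gt0 // lt_min => /andP[].
  by move=> /ub/(_ y); rewrite bump_at // leNgt uy1.
move=> y; rewrite leNgt; apply/negP => uy1.
pose h z := 1 - u z.
have hy : 0 < h y by rewrite subr_gt0.
have : bumps (bump h y).
  split=> //; first by apply/continuous_bump/continuous_subr => //;
    exact: cst_continuous.
  right=> i Si z; rewrite bump_gt0 // subr_gt0 => uz1.
  by rewrite leNgt; apply/negP => /(u_ge1_pos i z Si); rewrite leNgt uz1.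
by move=> /ub/(_ y); rewrite bump_at // leNgt uy1.
Qed.

Hypothesis csp : countable_sup_property R Y.

Lemma exists_countable_cozero_dense :
  exists T, [/\ T `<=` S, countable T & cozero_dense e T S].
Proof.
have bumpsC : bumps `<=` Cfun R Y by move=> t [].
have bumps0 : bumps !=set0.
  exists (fun=> 0); split; first exact: cst_continuous.
    by move=> _; rewrite lexx ler01.
  by right=> i _ y; rewrite ltxx.
have [B [Bbumps cB [_ _ supB]]] := csp _ bumpsC bumps0 _ bumps_sup.
pose pos_sub (t : Y -> R) i := forall y, 0 < t y -> 0 < e i y.
have [T [TS cT Tpos]] := countable_witnesses S
  (B `&` [set t | exists2 i, S i & pos_sub t i]) pos_sub
  (sub_countable (subset_card_le (@subIsetl _ _ _)) cB)
  (fun t => fun '(conj _ h) => h).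
exists T; split => // k kC kT i Si y ky; rewrite leNgt; apply/negP => eiy.
pose m z := Order.min (k z) (e i z).
have my : 0 < m y by rewrite lt_min ky eiy.
pose u z := 1 - bump m y z.
have uC : continuous u.
  apply: continuous_subr; first exact: cst_continuous.
  by apply/continuous_bump/min_fun_continuous => //; exact: e_continuous.
have Bu t : B t -> forall z, t z <= u z.
  move=> Bt z; have [_ t01 tkind] := Bbumps t Bt.
  have [tz|tz] := leP (t z) 0.
    by apply: le_trans tz _; rewrite subr_ge0 clamp01_le1.
  suff mz : m z <= 0 by rewrite /u bump_le0 // subr0; case/andP: (t01 z).
  case: tkind => [[j Sj tj]|tdisj]; last by rewrite ge_min tdisj ?orbT.
  have [l Tl tl] := Tpos t (conj Bt (ex_intro2 _ _ j Sj tj)).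
  rewrite ge_min; apply/orP; left; rewrite leNgt; apply/negP => kz.
  by have := kT l Tl z kz; rewrite leNgt tl.
by have := supB u uC Bu y; rewrite /u bump_at // subrr ler10.
Qed.

End countable_sup_cozero_dense.

Lemma countable_sup_cozero_dense_property (R : realType) (Y : topologicalType) :
  countable_sup_property R Y -> countable_cozero_dense_property R Y.
Proof. by move=> csp I e S eC; exact: exists_countable_cozero_dense. Qed.

Lemma dense_countable_cozero_dense_property {R : realType}
    {X : topologicalType} {A : set X} :
  dense A -> countable_cozero_dense_property R (set_type A) ->
  countable_cozero_dense_property R X.
Proof.
move=> dA hA I e S eC.
have [T [TS cT TdA]] := hA I (fun i a => e i (set_val a)) S
  (fun i Si => continuous_comp_set_val A (eC i Si)).
exists T; split => // k kC kT i Si y ky; rewrite leNgt; apply/negP => eiy.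
have [x [[kx eix] Ax]] : [set x | 0 < k x] `&` [set x | 0 < e i x] `&` A !=set0.
  apply: dA; first by exists y.
  by apply: openI; apply: open_pos => //; exact: eC.
have := TdA _ (continuous_comp_set_val A kC) (fun j Tj a => kT j Tj (set_val a))
  i Si (exist _ x (mem_set Ax)) kx.
by rewrite leNgt eix.
Qed.

Section cozero_dense_countable_sup.
Variables (R : realType) (Y : topologicalType).
Variables (S : set (Y -> R)) (g : Y -> R).
Hypotheses (SC : S `<=` Cfun R Y) (gsup : is_sup_C R Y S g).

Definition sup_gap (d : R) (f : Y -> R) y := f y - (g y - d).

Lemma sup_gap_continuous (d : R) {f : Y -> R} :
  S f -> continuous (sup_gap d f).
Proof.
move=> /SC fC; have [gC _ _] := gsup.
apply: continuous_subr fC (continuous_subr gC _); exact: cst_continuous.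
Qed.

(* Otherwise g - d * clamp01 (g - h - d) would be an upper bound of S that
   is not above g. *)
Lemma sup_sub_le_of_cozero_dense (d : R) (T : set (Y -> R)) :
  0 < d -> cozero_dense (sup_gap d) T S ->
  forall h, continuous h -> (forall f, T f -> forall y, f y <= h y) ->
  forall y, g y - h y <= d.
Proof.
move=> d0 TdS h hC hT; have [gC gub gleast] := gsup.
pose k y := g y - h y - d.
have kC : continuous k.
  by apply: continuous_subr; [exact: continuous_subr | exact: cst_continuous].
have kS f : S f -> pos_disjoint k (sup_gap d f).
  apply: TdS => // f' Tf' y; rewrite /k /sup_gap => ky.
  by have := hT f' Tf' y; lra.
pose u y := g y - d * clamp01 (k y).
have uC : continuous u.
  apply: continuous_subr => //; apply: continuous_mull.
  exact: continuous_clamp01.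
have Su f : S f -> forall y, f y <= u y.
  move=> Sf y; rewrite /u; have [ky|ky] := ltP 0 (k y); last first.
    by rewrite clamp01_le0 // mulr0 subr0; exact: gub.
  have := kS f Sf y ky; have := ler_piMr (ltW d0) (clamp01_le1 (k y)).
  by rewrite /sup_gap; lra.
move=> y; have := gleast u uC Su y; rewrite /u.
have := clamp01_gt0 (k y); have [ky|ky] := ltP 0 (k y); last first.
  by rewrite /k in ky; lra.
move=> /esym c0; have : 0 < d * clamp01 (k y) by rewrite mulr_gt0.
lra.
Qed.

Hypothesis ccd : countable_cozero_dense_property R Y.

Lemma countable_sup_of_cozero_dense :
  exists T, [/\ T `<=` S, countable T & is_sup_C R Y T g].
Proof.
have [gC gub _] := gsup.
have /choice[T hT] n : exists T, [/\ T `<=` S, countable T &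
    cozero_dense (sup_gap n.+1%:R^-1) T S].
  exact: ccd _ _ S (fun f Sf => sup_gap_continuous _ Sf).
have TS n : T n `<=` S by case: (hT n).
exists (\bigcup_n T n); split.
- by move=> f [n _ /TS].
- by apply: bigcup_countable => // n _; case: (hT n).
split => // [f [n _ /TS/gub]//|h hC hT_ub y].
rewrite leNgt; apply/negP => /ltr_add_invr[n hn].
have [_ _ Tn] := hT n.
have n0 : 0 < n.+1%:R^-1 :> R by rewrite invr_gt0.
have := sup_sub_le_of_cozero_dense _ _ n0 Tn _ hC
  (fun f Tf => hT_ub f (ex_intro2 _ _ n I Tf)) y.
by rewrite lerBlDl leNgt hn.
Qed.

End cozero_dense_countable_sup.

Theorem corollary4p12 (R : realType) (X : topologicalType) (A : set X) :
  dense A -> countable_sup_property R (set_type A) ->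
  countable_sup_property R X.
Proof.
move=> dA hA S SC _ g gsup.
apply: countable_sup_of_cozero_dense => //.
apply: (dense_countable_cozero_dense_property dA).
exact: countable_sup_cozero_dense_property.
Qed.
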